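(* For all integers $k$ and $D$ with $D\ge k\ge 2$, there exists a $k$-degenerate graph $H_{D,k}$ with maximum degree $D$ such that $H_{D,k}^2$ is not $\big((2k-1)D-k^2-1\big)$-degenerate; in fact $H_{D,k}^2$ contains an induced subgraph of minimum degree $(2k-1)D-k^2$.
   Context: A graph is $k$-degenerate if every subgraph has a vertex of degree at most $k$. The square $H^2$ is obtained from $H$ by adding an edge between every pair of vertices at distance 2 in $H$. *)

From mathcomp Require Import all_boot.
Set Implicit Arguments. Unset Strict Implicit. Unset Printing Implicit Defensive.

Definition simple_graph (T : finType) (e : rel T) : Prop :=
  symmetric e /\ irreflexive e.

Definition nbrs_in (T : finType) (e : rel T) (S : {set T}) (x : T) : {set T} :=
  [set y in S | e x y].

Definition deg (T : finType) (e : rel T) (x : T) : nat := #|[set y | e x y]|.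

Definition max_degree_eq (T : finType) (e : rel T) (D : nat) : Prop :=
  (forall x, deg e x <= D) /\ (exists x, deg e x = D).

Definition degenerate (T : finType) (e : rel T) (k : nat) : Prop :=
  forall S : {set T}, S != set0 -> exists2 x, x \in S & #|nbrs_in e S x| <= k.

Definition graph_square (T : finType) (e : rel T) : rel T :=
  fun x y => (x != y) && (e x y || [exists z, e x z && e z y]).

Definition has_induced_min_degree (T : finType) (e : rel T) (m : nat) : Prop :=
  exists2 S : {set T}, S != set0 & forall x, x \in S -> m <= #|nbrs_in e S x|.

From mathcomp Require Import all_boot zify.
Set Implicit Arguments. Unset Strict Implicit. Unset Printing Implicit Defensive.

(* Write D = d + 1 and view 'I_D as the alphabet
   {0, ..., D-1}.  The graph H is bipartite between "points", the words
   v : 'I_D -> 'I_D, and "lines" (j, g): the word g with coordinate j erased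
   (represented with g j = 0).  A point v lies on the line through it in
   direction j when j < k, or when v j < k.  So lines in directions j < k carry
   D points, the other lines only k points, and every point lies on at most D
   lines; H has maximum degree D (the constant word 0 reaches it).  H is
   k-degenerate: a set containing a short line has a vertex of degree <= k,
   otherwise a point of the set only sees the k long lines through it, and a
   set of lines alone is independent.
   In H^2, the "good" points (all coordinates j >= k below k) induce a graph of
   minimum degree k * d + (D - k) * (k - 1) = (2k - 1) D - k^2: from a good
   point one may change coordinate j < k to any of d other letters, and
   coordinate j >= k to any of k - 1 other letters below k, passing through a
   common line. *)

Lemma card_le_imset (aT rT : finType) (f : aT -> rT) (A : {set aT}) (B : {set rT}) :
  B \subset f @: A -> #|B| <= #|A|.
Proof. by move/subset_leq_card/leq_trans; apply; apply: leq_imset_card. Qed.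

Lemma min_degree_not_degenerate (T : finType) (e : rel T) (m : nat) :
  0 < m -> has_induced_min_degree e m -> ~ degenerate e m.-1.
Proof.
move=> m_gt0 [S S_n0 minS] /(_ S S_n0) [x xS deg_x].
by have := minS x xS; lia.
Qed.

Lemma card_ord_lt (n k : nat) : k <= n -> #|[set a : 'I_n | a < k]| = k.
Proof.
move=> le_kn.
have -> : [set a : 'I_n | a < k] = widen_ord le_kn @: [set: 'I_k].
  apply/setP=> a; rewrite inE; apply/idP/imsetP => [a_lt_k|[i _ ->] //=].
  by exists (Ordinal a_lt_k) => //; apply: val_inj.
by rewrite card_imset ?cardsT ?card_ord // => i j [] /val_inj.
Qed.

Lemma card_pairs (I J : finType) (P : I -> pred J) :
  #|[set p : I * J | P p.1 p.2]| = \sum_i #|[set b | P i b]|.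
Proof.
rewrite -sum1_card (eq_bigl (fun p : I * J => P p.1 p.2)) => [|p]; last by rewrite inE.
rewrite -(pair_big_dep xpredT P (fun _ _ => 1)).
by apply: eq_bigr => i _; rewrite sum1_card; apply: eq_card => b; rewrite inE.
Qed.

Lemma sum_split_at (n k x y : nat) : k <= n ->
  \sum_(j < n) (if j < k then x else y) = k * x + (n - k) * y.
Proof.
move=> le_kn; rewrite -(big_mkord xpredT (fun j => if j < k then x else y)).
rewrite (big_cat_nat _ (n := k)) //=.
rewrite (eq_big_nat _ _ (F2 := fun _ => x)); last by move=> i /andP [_ ->].
rewrite [X in _ + X](eq_big_nat _ _ (F2 := fun _ => y)); last first.
  by move=> i /andP [le_ki _]; rewrite ltnNge le_ki.
by rewrite !sum_nat_const_nat subn0.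
Qed.

Section Construction.

Variables k d : nat.
Hypothesis le_kD : k <= d.+1.
Local Notation D := d.+1.

(* Points are words of length D; a line (j, g) stands for the points that
   agree with g outside coordinate j (those with g j <> 0 are isolated). *)
Definition point := {ffun 'I_D -> 'I_D}.
Definition line := ('I_D * point)%type.
Definition vertex : finType := (point + line)%type.

Definition upd (v : point) (j a : 'I_D) : point :=
  [ffun i => if i == j then a else v i].

Definition allowed (j a : 'I_D) : bool := (j < k) || (a < k).

Definition incident (v : point) (l : line) : bool :=
  (l.2 == upd v l.1 ord0) && allowed l.1 (v l.1).

Definition grid : rel vertex := fun x y =>
  match x, y with
  | inl v, inr l | inr l, inl v => incident v l
  | _, _ => false
  end.

Lemma updE (v : point) j a i : upd v j a i = if i == j then a else v i.
Proof. by rewrite ffunE. Qed.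

Lemma upd_reset (v : point) j a : upd (upd v j a) j (v j) = v.
Proof. by apply/ffunP => i; rewrite !updE; case: eqP => [->|]. Qed.

Lemma upd_inj (v : point) j a j' a' :
  a != v j -> upd v j a = upd v j' a' -> j = j' /\ a = a'.
Proof.
move=> a_new /ffunP /(_ j); rewrite !updE eqxx.
by case: eqP => [-> -> //|_ a_old]; rewrite a_old eqxx in a_new.
Qed.

Lemma upd_neq (v : point) j a : a != v j -> upd v j a != v.
Proof. by move=> a_new; apply: contra a_new => /eqP/ffunP/(_ j); rewrite updE eqxx => ->. Qed.

Lemma grid_simple : simple_graph grid.
Proof. by split; [move=> [v|l] [w|m] | case]. Qed.

Lemma point_nbr (v : point) (y : vertex) :
  grid (inl v) y -> exists2 j, y = inr (j, upd v j ord0) & allowed j (v j).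
Proof. by case: y => // -[j g] /andP [/eqP /= -> ok]; exists j. Qed.

Lemma line_nbr (j : 'I_D) (g : point) (y : vertex) :
  grid (inr (j, g)) y -> exists2 w, y = inl w & w = upd g j (w j) /\ allowed j (w j).
Proof.
case: y => // w /andP [/eqP /= g_eq ok]; exists w => //.
by rewrite g_eq upd_reset.
Qed.

Lemma nbrs_in_deg (S : {set vertex}) (x : vertex) : #|nbrs_in grid S x| <= deg grid x.
Proof. by apply: subset_leq_card; apply/subsetP => y; rewrite !inE => /andP []. Qed.

Lemma deg_le (x : vertex) : deg grid x <= D.
Proof.
rewrite -[D]card_ord -cardsT; case: x => [v|[j g]].
  apply: (@card_le_imset _ _ (fun j => inr (j, upd v j ord0))).
  by apply/subsetP => y; rewrite inE => /point_nbr [i -> _]; apply: imset_f.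
apply: (@card_le_imset _ _ (fun a => inl (upd g j a))).
by apply/subsetP => y; rewrite inE => /line_nbr [w -> [-> _]]; apply: imset_f.
Qed.

(* The constant word 0 lies on D lines, so the maximum degree is D. *)
Lemma grid_max_degree : 0 < k -> max_degree_eq grid D.
Proof.
move=> k_gt0; split=> [|]; first exact: deg_le.
pose v0 : point := [ffun _ => ord0].
exists (inl v0); apply/eqP; rewrite eqn_leq deg_le /=.
pose line_at (j : 'I_D) : vertex := inr (j, upd v0 j ord0).
have line_at_inj : injective line_at by move=> i j [].
rewrite -{1}[D]card_ord -cardsT -(card_imset _ line_at_inj).
apply: subset_leq_card; apply/subsetP => _ /imsetP [j _ ->].
by rewrite inE /= /incident eqxx /allowed ffunE k_gt0 orbT.
Qed.

Lemma deg_short_line (j : 'I_D) (g : point) : k <= j -> deg grid (inr (j, g)) <= k.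
Proof.
move=> le_kj; rewrite -[k in _ <= k]card_ord -cardsT.
apply: (@card_le_imset _ _ (fun a => inl (upd g j (widen_ord le_kD a)))).
apply/subsetP => y; rewrite inE => /line_nbr [w -> [w_eq ok]].
have w_lt : w j < k by move: ok; rewrite /allowed ltnNge le_kj.
apply/imsetP; exists (Ordinal w_lt) => //; rewrite {1}w_eq.
by congr (inl (upd _ _ _)); apply: val_inj.
Qed.

Lemma point_nbrs_long (S : {set vertex}) (v : point) :
  (forall l : line, inr l \in S -> l.1 < k) -> #|nbrs_in grid S (inl v)| <= k.
Proof.
move=> long; rewrite -[k in _ <= k]card_ord -cardsT.
pose line_at (i : 'I_k) : vertex :=
  inr (widen_ord le_kD i, upd v (widen_ord le_kD i) ord0).
apply: (@card_le_imset _ _ line_at); apply/subsetP => y.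
rewrite inE => /andP [yS /point_nbr [j y_eq _]].
have j_lt : j < k by move: yS; rewrite y_eq => /long.
apply/imsetP; exists (Ordinal j_lt) => //; rewrite y_eq /line_at.
by have -> : widen_ord le_kD (Ordinal j_lt) = j by apply: val_inj.
Qed.

(* Every nonempty S has a vertex with at most k neighbours in S: a short
   line, else a point (seeing only long lines), else any (isolated) line. *)
Lemma grid_degenerate : degenerate grid k.
Proof.
move=> S S_n0.
case: (pickP [pred l : line | (inr l \in S) && (k <= l.1)]) => [[j g] /andP [lS le_kj] | no_short].
  by exists (inr (j, g)) => //; apply: leq_trans (nbrs_in_deg _ _) (deg_short_line _ le_kj).
have long (l : line) : inr l \in S -> l.1 < k.
  by move=> lS; have := no_short l; rewrite /= lS /= ltnNge => ->.
case: (pickP [pred v : point | inl v \in S]) => [v vS | no_point].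
  by exists (inl v) => //; apply: point_nbrs_long.
case/set0Pn: S_n0 => x xS; exists x => //.
rewrite (_ : nbrs_in grid S x = set0) ?cards0 //; apply/setP => y; rewrite !inE.
case: x xS => [v|l] xS; first by have := no_point v; rewrite /= xS.
by case: y => [w|m] /=; [have := no_point w; rewrite /= => ->|rewrite andbF].
Qed.

Definition good (v : point) : bool := [forall j : 'I_D, (k <= j) ==> (v j < k)].

Definition good_points : {set vertex} :=
  [set x | if x is inl v then good v else false].

Lemma goodP (v : point) : reflect (forall j, allowed j (v j)) (good v).
Proof.
apply: (iffP forallP) => [gv j | ok j].
  by have := gv j; rewrite /allowed; case: (ltnP j k).
by have := ok j; rewrite /allowed; case: (ltnP j k).
Qed.

Lemma good_upd (v : point) j a : good v -> allowed j a -> good (upd v j a).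
Proof. by move=> /goodP gv ok; apply/goodP => i; rewrite updE; case: eqP => [->|]. Qed.

Lemma square_upd (v : point) j a :
  a != v j -> allowed j (v j) -> allowed j a ->
  graph_square grid (inl v) (inl (upd v j a)).
Proof.
move=> a_new ok_v ok_a; rewrite /graph_square eq_sym inj_eq ?upd_neq //=; last by move=> ? ? [].
apply/existsP; exists (inr (j, upd v j ord0)); rewrite /= /incident /= eqxx ok_v /=.
by rewrite updE eqxx ok_a andbT; apply/eqP/ffunP => i; rewrite !updE; case: eqP.
Qed.

Lemma card_changes_at (v : point) j : good v ->
  #|[set a | (a != v j) && allowed j a]| = if j < k then d else k.-1.
Proof.
move=> /goodP gv; rewrite /allowed; case: ifP => [j_lt|j_ge] /=.
  transitivity #|predC1 (v j)|; last by rewrite cardC1 card_ord.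
  by apply: eq_card => a; rewrite !inE andbT.
have vj_lt : v j < k by have := gv j; rewrite /allowed j_ge.
rewrite (_ : [set a | _] = [set a : 'I_D | a < k] :\ v j); last first.
  by apply/setP => a; rewrite !inE.
have := cardsD1 (v j) [set a : 'I_D | a < k].
by rewrite inE vj_lt card_ord_lt // add1n => /(congr1 predn) /= <-.
Qed.

Lemma card_changes (v : point) : good v ->
  #|[set ja : 'I_D * 'I_D | (ja.2 != v ja.1) && allowed ja.1 ja.2]|
  = k * d + (D - k) * k.-1.
Proof.
move=> gv; rewrite (card_pairs (fun j a => (a != v j) && allowed j a)).
by rewrite -sum_split_at //; apply: eq_bigr => j _; apply: card_changes_at.
Qed.

(* In H^2 each good point is adjacent to all its allowed single-letter
   changes, which are good again. *)
Lemma square_min_degree (v : point) : good v ->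
  k * d + (D - k) * k.-1 <= #|nbrs_in (graph_square grid) good_points (inl v)|.
Proof.
move=> gv; rewrite -(card_changes gv).
set changes := [set ja | _].
pose change (ja : 'I_D * 'I_D) : vertex := inl (upd v ja.1 ja.2).
have change_inj : {in changes &, injective change}.
  by move=> [j a] [j' a']; rewrite inE /= => /andP [a_new _] _ [] /(upd_inj a_new) /= [-> ->].
rewrite -(card_in_imset change_inj).
apply: subset_leq_card; apply/subsetP => _ /imsetP [[j a] + ->] /=.
rewrite inE /= => /andP [a_new ok_a].
have ok_v : allowed j (v j) by move/goodP: gv.
by rewrite /change !inE /= good_upd // square_upd.
Qed.

End Construction.

Arguments grid k d : clear implicits.
Arguments good_points k d : clear implicits.

Lemma square_bound_eq (k d : nat) : 2 <= k -> k <= d.+1 ->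
  (2 * k - 1) * d.+1 - k ^ 2 = k * d + (d.+1 - k) * k.-1.
Proof.
move=> le_2k le_kD.
have [r ->] : exists r, d = k.-1 + r by exists (d - k.-1); lia.
have [k' ->] : exists k', k = k'.+1 by exists k.-1; lia.
rewrite subSS addKn (_ : 2 * k'.+1 - 1 = (2 * k').+1) ?expnS ?expn1 /=; [nia | lia].
Qed.

Theorem mainTheorem12 (k D : nat) :
  2 <= k -> k <= D ->
  exists (T : finType) (e : rel T),
    [/\ simple_graph e, degenerate e k, max_degree_eq e D,
        ~ degenerate (graph_square e) ((2 * k - 1) * D - k ^ 2 - 1)
      & has_induced_min_degree (graph_square e) ((2 * k - 1) * D - k ^ 2)].
Proof.
move=> le_2k; case: D => [|d] le_kD; first by lia.
pose v0 : point d := [ffun _ => ord0].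
have good_v0 : good k v0 by apply/forallP => j; apply/implyP => _; rewrite ffunE /=; lia.
have induced : has_induced_min_degree (graph_square (grid k d))
                 ((2 * k - 1) * d.+1 - k ^ 2).
  exists (good_points k d); first by apply/set0Pn; exists (inl v0); rewrite inE.
  move=> [v|l]; rewrite inE // => gv; rewrite square_bound_eq //.
  exact: square_min_degree.
exists (vertex d), (grid k d); split => //.
- exact: grid_simple.
- exact: grid_degenerate.
- by apply: grid_max_degree; lia.
- rewrite subn1; apply: min_degree_not_degenerate induced.
  by rewrite square_bound_eq //; lia.
Qed.
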